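(* Let $(X_i)_{i\in\mathbb{Z}}$ be a sequence (not necessarily stationary) of square-integrable random variables adapted to a nondecreasing filtration $(\mathcal{F}_i)_{i\in\mathbb{Z}}$. For $n\ge 1$ let $S_n=\sum_{k=1}^n X_k$ and $M_n=\max_{1\le i\le n}|S_i|$. Then for every $n\ge1$, $$\mathbb{E}(M_n)^2 \le 4\sum_{k=1}^n \mathbb{E}(X_k^2) + 12\sum_{k=1}^{n-1}\big\|X_k\,\mathbb{E}(S_n-S_k\mid\mathcal{F}_k)\big\|_1 .$$
   Context: $\|\cdot\|_1$ denotes the $\mathbb{L}_1$ norm, $\|Y\|_1=\mathbb{E}|Y|$. *)

From HB Require Import structures.
From mathcomp Require Import all_boot all_order all_algebra.
From mathcomp Require Import all_classical all_reals all_analysis.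
Set Implicit Arguments. Unset Strict Implicit. Unset Printing Implicit Defensive.
Import Order.TTheory GRing.Theory Num.Theory.
Local Open Scope classical_set_scope.
Local Open Scope ring_scope.

Definition sub_sigma_algebra d (T : measurableType d) (G : set (set T)) :=
  sigma_algebra setT G /\ G `<=` measurable.

Definition G_measurable d (T : measurableType d) (R : realType)
  (G : set (set T)) (f : T -> R) :=
  forall B : set R, measurable B -> G (f @^-1` B).

Definition filtration d (T : measurableType d) (F : int -> set (set T)) :=
  (forall i, sub_sigma_algebra (F i)) /\ (forall i j, (i <= j)%R -> F i `<=` F j).

Definition is_cond_exp d (T : measurableType d) (R : realType)
  (P : probability T R) (G : set (set T)) (Y Z : T -> R) :=
  [/\ G_measurable G Z, P.-integrable setT (EFin \o Z) &
      forall A, G A -> (\int[P]_(x in A) (Z x)%:E = \int[P]_(x in A) (Y x)%:E)%E].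

Definition psum d (T : measurableType d) (R : realType) (X : int -> T -> R)
  (n : nat) (x : T) : R := \sum_(1 <= k < n.+1) X (k%:Z) x.

Definition pmax d (T : measurableType d) (R : realType) (X : int -> T -> R)
  (n : nat) (x : T) : R := \big[Num.max/0]_(1 <= i < n.+1) `|psum X i x|.

From HB Require Import structures.
From mathcomp Require Import all_boot all_order all_algebra.
From mathcomp Require Import all_classical all_reals all_analysis.
From mathcomp Require Import measurable_realfun.
From mathcomp Require Import ring lra.
Import Order.TTheory GRing.Theory Num.Theory numFieldNormedType.Exports.
Local Open Scope classical_set_scope.
Local Open Scope ring_scope.

(* Write m_k = max_(i <= k) |S_i| and clip_m s for s clipped to [-m/4, m/4].
   The potential Phi(m, s) = 3/2 m^2 - 4 s^2 + 8 (s - clip_m s)^2 dominates m^2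
   when |s| <= m, and along the path (m_k, S_k) it increases at step k+1 by at
   most G_k X_(k+1) + 4 X_(k+1)^2, where G_k = dPhi/ds (m_k, S_k) vanishes at
   k = 0 and moves by at most 8 |X_k| at step k.  Summation by parts then gives
   the pathwise bound
     M_n^2 <= 4 sum_k X_k^2 + sum_(j < n) (G_j - G_(j-1)) (S_n - S_j),
   whose coefficients G_j - G_(j-1) are F_j-measurable and bounded by 8 |X_j|.
   Hence, in expectation, each term of the last sum may be replaced by
   (G_j - G_(j-1)) E(S_n - S_j | F_j), which proves the bound with 8 in place
   of 12. *)

Set Implicit Arguments. Unset Strict Implicit.

Section Potential.
Variable R : realType.
Implicit Types m s x : R.

Definition clip m s := Order.max (- (m / 4)) (Order.min s (m / 4)).

Definition potential m s := 3 / 2 * m ^+ 2 - 4 * s ^+ 2 + 8 * (s - clip m s) ^+ 2.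

(* [potential m] is C^1 and piecewise quadratic in [s], with second derivative
   -8 or 8, and [potential_slope m] is its derivative: hence the constants 4
   and 8 in the Taylor and Lipschitz bounds below. *)
Definition potential_slope m s := 8 * s - 16 * clip m s.

Variant clip_spec m s : R -> Type :=
  | ClipLow of s < - (m / 4) : clip_spec m s (- (m / 4))
  | ClipMid of - (m / 4) <= s <= m / 4 : clip_spec m s s
  | ClipHigh of m / 4 < s : clip_spec m s (m / 4).

Lemma clipP m s : 0 <= m -> clip_spec m s (clip m s).
Proof.
move=> m0; rewrite /clip; case: (leP s (m / 4)) => [sm|ms].
  case: (leP (- (m / 4)) s) => [ls|sl]; last exact: ClipLow.
  by apply: ClipMid; rewrite ls sm.
by case: (leP (- (m / 4)) (m / 4)) => ?; [exact: ClipHigh | lra].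
Qed.

Lemma potential_ge m s : `|s| <= m -> m ^+ 2 <= potential m s.
Proof.
move=> sm; have m0 : 0 <= m := le_trans (normr_ge0 s) sm.
have := sqr_ge0 (2 * s + m); have := sqr_ge0 (2 * s - m).
by rewrite /potential; case: clipP => // *; nra.
Qed.

Lemma potential_taylor m s x : 0 <= m ->
  potential m (s + x) <= potential m s + potential_slope m s * x + 4 * x ^+ 2.
Proof.
move=> m0; rewrite /potential /potential_slope.
by case: (clipP s m0) => ?; case: (clipP (s + x) m0) => ?; nra.
Qed.

Lemma potential_slope_lipschitz m s x : 0 <= m ->
  `|potential_slope m (s + x) - potential_slope m s| <= 8 * `|x|.
Proof.
move=> m0; rewrite /potential_slope.
by case: (clipP s m0) => ?; case: (clipP (s + x) m0) => ?;
  rewrite ler_norml; case: (ler0P x) => x0; apply/andP; split; lra.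
Qed.

Lemma clip_norm s : clip `|s| s = s / 4.
Proof. by case: (clipP s (normr_ge0 s)); case: ler0P => ? ? //; lra. Qed.

Lemma potential_new_max m s x : `|s| <= m -> m < `|s + x| ->
  potential `|s + x| (s + x) <= potential m (s + x) /\
  `|potential_slope `|s + x| (s + x) - potential_slope m s| <= 8 * `|x|.
Proof.
move=> sm mx; have m0 : 0 <= m := le_trans (normr_ge0 s) sm.
have := sqr_ge0 (`|s + x| - m).
move: sm; rewrite ler_norml => /andP[? ?].
rewrite /potential /potential_slope ler_norml !clip_norm.
case: (ler0P (s + x)) mx => ? ? ?; case: (clipP (s + x) m0) => ?;
  try (exfalso; lra); case: (clipP s m0) => ?; case: (ler0P x) => ?;
  (split; [nra | apply/andP; split; lra]).
Qed.

Lemma potential_step m s x : `|s| <= m ->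
  potential (Num.max m `|s + x|) (s + x)
    <= potential m s + potential_slope m s * x + 4 * x ^+ 2 /\
  `|potential_slope (Num.max m `|s + x|) (s + x) - potential_slope m s| <= 8 * `|x|.
Proof.
move=> sm; have m0 := le_trans (normr_ge0 s) sm.
case: (lerP `|s + x| m) => [_|mx].
  by split; [exact: potential_taylor | exact: potential_slope_lipschitz].
have [Phi_le slope_le] := potential_new_max sm mx.
by split => //; apply: le_trans Phi_le (potential_taylor _ _ m0).
Qed.

End Potential.

Section Pathwise.
Variables (d : measure_display) (T : measurableType d) (R : realType).
Variable X : int -> T -> R.
Implicit Type x : T.

Lemma psum0 x : psum X 0 x = 0.
Proof. by rewrite /psum big_geq. Qed.

Lemma psumS k x : psum X k.+1 x = psum X k x + X k.+1%:Z x.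
Proof. by rewrite /psum big_nat_recr. Qed.

Lemma pmax0 x : pmax X 0 x = 0.
Proof. by rewrite /pmax big_geq. Qed.

Lemma bigmax_nonneg_idx (r : seq nat) (f : nat -> R) y : 0 <= y ->
  \big[Num.max/y]_(i <- r) f i = Num.max (\big[Num.max/0]_(i <- r) f i) y.
Proof.
move=> y0; elim: r => [|i r IH]; first by rewrite !big_nil; apply/esym/max_r.
by rewrite !big_cons IH maxA.
Qed.

Lemma pmaxS k x : pmax X k.+1 x = Num.max (pmax X k x) `|psum X k.+1 x|.
Proof.
rewrite /pmax; have -> : index_iota 1 k.+2 = rcons (index_iota 1 k.+1) k.+1.
  by rewrite /index_iota !subSS !subn0 -cats1 -[in LHS](addn1 k) iotaD add1n.
by rewrite big_rcons_op /= (max_l (normr_ge0 _)) bigmax_nonneg_idx.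
Qed.

Lemma norm_psum_le_pmax k x : `|psum X k x| <= pmax X k x.
Proof.
elim: k => [|k IH]; first by rewrite pmax0 psum0 normr0.
by rewrite pmaxS le_max lexx orbT.
Qed.

Definition slope k x := potential_slope (pmax X k x) (psum X k x).

Definition slope_incr k x := slope k x - slope k.-1 x.

Lemma slope0 x : slope 0 x = 0.
Proof.
rewrite /slope /potential_slope /clip pmax0 psum0.
by rewrite mul0r oppr0 minxx maxxx !mulr0 subr0.
Qed.

Lemma slope_incr_le k x : `|slope_incr k x| <= 8 * `|X k%:Z x|.
Proof.
case: k => [|k]; first by rewrite /slope_incr subrr normr0 mulr_ge0.
rewrite /slope_incr /slope /= pmaxS psumS.
exact: (potential_step (X k.+1%:Z x) (norm_psum_le_pmax k x)).2.
Qed.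

(* Summation by parts: the Taylor increments [slope (k-1) * X_k] add up to
   [sum_j slope_incr j * (S_N - S_j)], because [slope 0 = 0]. *)
Lemma potential_path_le N k x : (k <= N)%N ->
  potential (pmax X k x) (psum X k x) + slope k x * (psum X N x - psum X k x) <=
  4 * (\sum_(1 <= i < k.+1) X i%:Z x ^+ 2) +
  \sum_(1 <= j < k.+1) slope_incr j x * (psum X N x - psum X j x).
Proof.
elim: k => [_|k IH kN].
  rewrite slope0 pmax0 psum0 !big_geq // mul0r addr0 mulr0.
  by rewrite /potential /clip mul0r oppr0 minxx maxxx; lra.
have {}IH := IH (ltnW kN).
have [step _] := potential_step (X k.+1%:Z x) (norm_psum_le_pmax k x).
rewrite -psumS -pmaxS in step.
rewrite !(big_nat_recr k.+1) //= /slope_incr /=.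
move: IH step; rewrite psumS /slope; nra.
Qed.

Lemma pathwise_bound N x :
  pmax X N x ^+ 2 <= 4 * (\sum_(1 <= i < N.+1) X i%:Z x ^+ 2) +
  \sum_(1 <= j < N) slope_incr j x * (psum X N x - psum X j x).
Proof.
have := potential_ge (norm_psum_le_pmax N x).
have := potential_path_le x (leqnn N); rewrite subrr mulr0 addr0.
case: N => [|N]; first by rewrite !big_geq //; lra.
by rewrite [Y in _ <= _ + Y]big_nat_recr //= subrr mulr0 addr0; lra.
Qed.

End Pathwise.

Section Measurability.
Variables (d : measure_display) (T : measurableType d) (R : realType).
Variables (X : int -> T -> R) (j : nat).
Hypothesis mX : forall i : nat, (1 <= i <= j)%N -> measurable_fun setT (X i%:Z).

Lemma measurable_clip (m s : T -> R) : measurable_fun setT m ->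
  measurable_fun setT s -> measurable_fun setT (fun x => clip (m x) (s x)).
Proof.
move=> mm ms; have mm4 : measurable_fun setT (fun x => m x / 4).
  by apply: measurable_funM => //; exact: measurable_cst.
apply: (@measurable_maxr _ _ _ _ (fun x => - (m x / 4))
                                 (s \min (fun x => m x / 4))).
  exact: measurable_funN.
exact: measurable_minr.
Qed.

Lemma measurable_psum k : (k <= j)%N -> measurable_fun setT (psum X k).
Proof.
elim: k => [_|k IH kj].
  rewrite (_ : psum X 0 = cst 0); first exact: measurable_cst.
  by apply/funext => x; rewrite psum0.
rewrite (_ : psum X k.+1 = psum X k \+ X k.+1%:Z); last first.
  by apply/funext => x; rewrite psumS.
by apply: measurable_funD; [exact/IH/ltnW | apply: mX; rewrite kj].
Qed.

Lemma measurable_pmax k : (k <= j)%N -> measurable_fun setT (pmax X k).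
Proof.
elim: k => [_|k IH kj].
  rewrite (_ : pmax X 0 = cst 0); first exact: measurable_cst.
  by apply/funext => x; rewrite pmax0.
rewrite (_ : pmax X k.+1 = pmax X k \max (Num.norm \o psum X k.+1)); last first.
  by apply/funext => x; rewrite pmaxS.
apply: measurable_maxr; first exact/IH/ltnW.
by apply: measurableT_comp => //; exact: measurable_psum.
Qed.

Lemma measurable_slope k : (k <= j)%N -> measurable_fun setT (slope X k).
Proof.
move=> kj; apply: measurable_funB.
  by apply: measurable_funM; [exact: measurable_cst | exact: measurable_psum].
apply: measurable_funM; first exact: measurable_cst.
by apply: measurable_clip; [exact: measurable_pmax | exact: measurable_psum].
Qed.

Lemma measurable_slope_incr : measurable_fun setT (slope_incr X j).
Proof.
apply: measurable_funB; first exact: measurable_slope.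
by apply: measurable_slope; exact: leq_pred.
Qed.

End Measurability.

Section SubSigmaAlgebra.
Variables (d : measure_display) (T : measurableType d) (R : realType).
Variable G : set (set T).

Lemma G_measurableP (f : T -> R) : sigma_algebra setT G ->
  G_measurable G f <-> measurable_fun (setT : set (g_sigma_algebraType G)) f.
Proof.
move=> sG; split => [Gf _ B mB | mf B mB].
  by rewrite setTI /measurable /= (sigma_algebra_id sG); exact: Gf.
by have := mf measurableT B mB; rewrite setTI /measurable /= (sigma_algebra_id sG).
Qed.

Lemma G_measurable_measurable (f : T -> R) : G `<=` measurable ->
  G_measurable G f -> measurable_fun setT f.
Proof. by move=> GM Gf _ B mB; rewrite setTI; apply: GM; exact: Gf. Qed.

End SubSigmaAlgebra.

Lemma slope_incr_adapted (d : measure_display) (T : measurableType d)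
    (R : realType) (X : int -> T -> R) (F : int -> set (set T)) (j : nat) :
  filtration F -> (forall i, G_measurable (F i) (X i)) ->
  G_measurable (F j%:Z) (slope_incr X j).
Proof.
move=> [sF monoF] adX; have sFj := (sF j%:Z).1.
apply/(G_measurableP _ sFj).
apply: (@measurable_slope_incr _ (g_sigma_algebraType (F j%:Z))) => i /andP[_ ij].
apply/(G_measurableP _ sFj) => B mB.
by apply: (monoF i%:Z); [rewrite lez_nat | exact: adX].
Qed.

Section Grid.
Context {R : realType}.

Definition mesh (K : nat) : R := K.+1%:R^-1.
Definition node (K i : nat) : R := i%:R * mesh K - K.+1%:R.
Definition ncell (K : nat) : nat := (2 * K.+1 ^ 2)%N.

Lemma mesh_gt0 K : 0 < mesh K.
Proof. by rewrite /mesh invr_gt0 ltr0Sn. Qed.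

Lemma mesh_le1 K : mesh K <= 1.
Proof. by rewrite /mesh invf_le1 ?ltr0Sn // ler1n. Qed.

Lemma nodeS K i : node K i.+1 = node K i + mesh K.
Proof. by rewrite /node -addn1 natrD; ring. Qed.

Lemma node0 K : node K 0 = - K.+1%:R.
Proof. by rewrite /node mul0r sub0r. Qed.

Lemma node_ncell K : node K (ncell K) = K.+1%:R.
Proof.
rewrite /node /ncell /mesh natrM natrX.
have : K.+1%:R != 0 :> R by rewrite pnatr_eq0.
by rewrite -natr1 => ?; field.
Qed.

End Grid.

(* [quantize K] rounds [W] down to the grid of mesh [1/(K+1)] on [[-(K+1), K+1)]
   and vanishes elsewhere; it is a finite combination of indicators of the
   cells, which belong to every sigma-algebra making [W] measurable. *)
Section Quantization.
Variables (d : measure_display) (T : measurableType d) (R : realType).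
Variable W : T -> R.

Definition cell (K i : nat) : set T := W @^-1` `[node K i, node K i + mesh K[.
Definition quantize (K : nat) (x : T) : R :=
  \sum_(0 <= i < ncell K) node K i * \1_(cell K i) x.

Lemma in_cell K i x : (x \in cell K i) = (node K i <= W x < node K i + mesh K).
Proof.
rewrite /cell; apply/idP/idP; first by rewrite in_setE /= in_itv.
by move=> h; rewrite in_setE /= in_itv.
Qed.

Lemma cell_inj K i j x : x \in cell K i -> x \in cell K j -> i = j.
Proof.
rewrite !in_cell /node => /andP[? ?] /andP[? ?]; have := @mesh_gt0 R K.
case: (ltngtP i j) => // ij; move: ij; rewrite -(ler_nat R) -natr1 => ? ?.
  by exfalso; nra.
by exfalso; nra.
Qed.

Lemma quantizeE K i x : (i < ncell K)%N -> x \in cell K i -> quantize K x = node K i.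
Proof.
move=> iK xi; rewrite /quantize (bigD1_seq i) ?mem_index_iota ?iota_uniq //=.
rewrite indicE xi mulr1 big1 ?addr0 // => j ji; rewrite indicE.
case: (boolP (x \in cell K j)) => [xj|_]; last by rewrite mulr0.
by rewrite (cell_inj xj xi) eqxx in ji.
Qed.

Lemma exists_cell K x : - K.+1%:R <= W x < K.+1%:R ->
  exists2 i, (i < ncell K)%N & x \in cell K i.
Proof.
rewrite -node0 -node_ncell => /andP[lo]; elim: (ncell K) => [|n IH] hi.
  by move: (lt_le_trans hi lo); rewrite ltxx.
case: (ltrP (W x) (node K n)) => [/IH[i ? ?]|?].
  by exists i => //; exact: ltnW.
by exists n => //; rewrite in_cell -nodeS; apply/andP.
Qed.

Lemma quantize_le K x : `|quantize K x| <= `|W x| + 1.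
Proof.
have [[i iK xi]|nocell] := pselect (exists2 i, (i < ncell K)%N & x \in cell K i).
  move: (xi); rewrite (quantizeE iK xi) in_cell => /andP[? ?].
  have := @mesh_le1 R K; have := @mesh_gt0 R K.
  by rewrite ler_norml; case: (ler0P (W x)) => ? ? ?; apply/andP; split; lra.
rewrite /quantize big1_seq ?normr0 ?addr_ge0 // => i /andP[_ iK].
rewrite indicE; case: (boolP (x \in cell K i)) => [xi|_]; last by rewrite mulr0.
by exfalso; apply: nocell; exists i => //; rewrite mem_index_iota in iK.
Qed.

Lemma quantize_close K x : - K.+1%:R <= W x < K.+1%:R ->
  `|W x - quantize K x| <= mesh K.
Proof.
move=> /exists_cell[i iK xi]; rewrite (quantizeE iK xi).
move: xi; rewrite in_cell => /andP[? ?]; have := @mesh_gt0 R K.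
by rewrite ler_norml => ?; apply/andP; split; lra.
Qed.

Lemma cvg_quantize x : (quantize ^~ x) @ \oo --> W x.
Proof.
apply/cvgrPdist_le => e e0; near=> K.
have WK : `|W x| <= K%:R by near: K; exact: nbhs_infty_ger.
have eK : e^-1 <= K%:R by near: K; exact: nbhs_infty_ger.
apply: (le_trans (quantize_close _)).
  by move: WK; rewrite ler_norml -natr1 => /andP[? ?]; apply/andP; split; lra.
by rewrite /mesh invf_ple ?posrE ?ltr0Sn // -natr1; lra.
Unshelve. all: by end_near.
Qed.

End Quantization.

Section Integrability.
Variables (d : measure_display) (T : measurableType d) (R : realType).
Variable mu : {measure set T -> \bar R}.
Implicit Types f g : T -> R.

Lemma integrable_le_norm f g : measurable_fun setT f ->
  mu.-integrable setT (EFin \o g) -> (forall x, `|f x| <= `|g x|) ->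
  mu.-integrable setT (EFin \o f).
Proof.
move=> mf ig fg; apply: le_integrable ig => //; first exact/measurable_EFinP.
by move=> x _; rewrite /comp !abse_EFin lee_fin.
Qed.

Lemma integrable_EFinD f g : mu.-integrable setT (EFin \o f) ->
  mu.-integrable setT (EFin \o g) -> mu.-integrable setT (EFin \o (f \+ g)).
Proof.
move=> fi gi.
apply: (eq_integrable measurableT _ _ _ (integrableD measurableT fi gi)).
by move=> x _; rewrite /= EFinD.
Qed.

Lemma integrable_EFinZ f k : mu.-integrable setT (EFin \o f) ->
  mu.-integrable setT (EFin \o (fun x => k * f x)).
Proof.
move=> fi.
apply: (eq_integrable measurableT _ _ _ (integrableZl measurableT k fi)).
by move=> x _; rewrite /= EFinM.
Qed.

Lemma integrable_EFin_sum (I : Type) (r : seq I) (f : I -> T -> R) :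
  (forall i, mu.-integrable setT (EFin \o f i)) ->
  mu.-integrable setT (EFin \o (fun x => \sum_(i <- r) f i x)).
Proof.
move=> fi.
apply: (eq_integrable measurableT _ _ _ (integrable_sum measurableT r _)).
  by move=> x _; rewrite /= -sumEFin.
by move=> i _; exact: fi.
Qed.

Definition square_integrable f :=
  measurable_fun setT f /\ mu.-integrable setT (fun x => (f x ^+ 2)%:E).

Lemma square_integrable_le f g : measurable_fun setT f ->
  square_integrable g -> (forall x, `|f x| <= `|g x|) -> square_integrable f.
Proof.
move=> mf [_ ig] fg; split => //.
apply: (integrable_le_norm _ ig); first exact: measurable_funX.
move=> x; rewrite !ger0_norm ?sqr_ge0 // -[f x ^+ 2]real_normK ?num_real //.
by rewrite -[g x ^+ 2]real_normK ?num_real // lerXn2r ?nnegrE.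
Qed.

Lemma square_integrableD f g : square_integrable f -> square_integrable g ->
  square_integrable (f \+ g).
Proof.
move=> [mf if2] [mg ig2]; split; first exact: measurable_funD.
apply: (integrable_le_norm _ (integrable_EFinD (integrable_EFinZ 2 if2)
                                                 (integrable_EFinZ 2 ig2))).
  exact/measurable_funX/measurable_funD.
move=> x /=; rewrite ger0_norm ?sqr_ge0 // ger0_norm.
  by have := sqr_ge0 (f x - g x); nra.
by rewrite addr_ge0 // mulr_ge0 // sqr_ge0.
Qed.

Lemma square_integrableZ f k : square_integrable f ->
  square_integrable (fun x => k * f x).
Proof.
move=> [mf if2]; split; first by apply: measurable_funM => //; exact: measurable_cst.
apply: (eq_integrable measurableT _ _ _ (integrable_EFinZ (k ^+ 2) if2)) => x _.
by rewrite /= exprMn.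
Qed.

Lemma square_integrable_mul f g : square_integrable f -> square_integrable g ->
  mu.-integrable setT (EFin \o (f \* g)).
Proof.
move=> [mf if2] [mg ig2].
apply: (integrable_le_norm _ (integrable_EFinD if2 ig2)).
  exact: measurable_funM.
move=> x /=; rewrite normrM [X in _ <= X]ger0_norm ?addr_ge0 ?sqr_ge0 //.
rewrite -[f x ^+ 2]real_normK ?num_real // -[g x ^+ 2]real_normK ?num_real //.
by have := normr_ge0 (f x); have := normr_ge0 (g x); nra.
Qed.

End Integrability.

Lemma square_integrable_integrable (d : measure_display) (T : measurableType d)
    (R : realType) (mu : {finite_measure set T -> \bar R}) (f : T -> R) :
  square_integrable mu f -> mu.-integrable setT (EFin \o f).
Proof.
move=> [mf if2].
have i1 := finite_measure_integrable_cst mu 1 measurableT.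
apply: (integrable_le_norm mf (integrable_EFinD if2 i1)) => x /=.
rewrite [X in _ <= X]ger0_norm ?addr_ge0 ?sqr_ge0 //.
by rewrite -[f x ^+ 2]real_normK ?num_real //; have := normr_ge0 (f x); nra.
Qed.

Section QuantizedIntegral.
Variables (d : measure_display) (T : measurableType d) (R : realType).
Variable mu : {measure set T -> \bar R}.
Variables (G : set (set T)) (W : T -> R).
Hypotheses (GM : G `<=` measurable) (GW : G_measurable G W).

Lemma G_cell K i : G (cell W K i).
Proof. by apply: GW; exact: measurable_itv. Qed.

Lemma measurable_quantize K : measurable_fun setT (quantize W K).
Proof.
apply: measurable_sum => i; apply: measurable_funM; first exact: measurable_cst.
exact/measurable_indic/GM/G_cell.
Qed.

Lemma integral_quantize_mul (V : T -> R) K : mu.-integrable setT (EFin \o V) ->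
  (\int[mu]_x (quantize W K x * V x)%:E =
   \sum_(0 <= i < ncell K) (node K i)%:E * \int[mu]_(x in cell W K i) (V x)%:E)%E.
Proof.
move=> iV; have mV := measurable_int _ iV; move/measurable_EFinP in mV.
have icell i : mu.-integrable setT (fun x => (\1_(cell W K i) x * V x)%:E).
  apply: (integrable_le_norm _ iV) => [|x].
    exact/measurable_funM/mV/measurable_indic/GM/G_cell.
  by rewrite normrM indicE; case: (_ \in _); rewrite ?normr1 ?normr0 ?mul1r ?mul0r.
transitivity (\int[mu]_x (\sum_(0 <= i < ncell K)
                            (node K i)%:E * (\1_(cell W K i) x * V x)%:E))%E.
  apply: eq_integral => x _; rewrite /quantize big_distrl /= -sumEFin.
  by apply: eq_bigr => i _; rewrite -EFinM mulrA.
rewrite integral_sum //; last by move=> i; exact: integrableZl.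
apply: eq_bigr => i _; rewrite integralZl //; congr (_ * _)%E.
rewrite [RHS]integral_mkcond; apply: eq_integral => x _; rewrite /patch indicE.
by case: (_ \in _); rewrite ?mul1r ?mul0r.
Qed.

Lemma cvg_integral_quantize_mul (V : T -> R) : mu.-integrable setT (EFin \o V) ->
  mu.-integrable setT (EFin \o (W \* V)) ->
  (\int[mu]_x (quantize W K x * V x)%:E)%E @[K --> \oo] -->
  (\int[mu]_x (W x * V x)%:E)%E.
Proof.
move=> iV iWV; have mV := measurable_int _ iV; move/measurable_EFinP in mV.
apply: (@dominated_cvg _ _ _ mu setT measurableT
  (fun K x => (quantize W K x * V x)%:E) _ (fun x => (`|W x * V x| + `|V x|)%:E)).
- move=> K; apply/measurable_EFinP/measurable_funM => //.
  exact: measurable_quantize.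
- move=> x _; apply: cvg_EFin; first exact: nearW.
  by apply: cvgMr_tmp; exact: cvg_quantize.
- by [].
- apply: (eq_integrable measurableT _ _ _ (integrableD measurableT
    (integrable_norm iWV) (integrable_norm iV))).
  by move=> x _; rewrite /= EFinD.
- move=> K x _; rewrite abse_EFin lee_fin !normrM.
  have := quantize_le W K x; have := normr_ge0 (V x); have := normr_ge0 (W x).
  by nra.
Qed.

(* [Z] need only satisfy the defining identity of E(Y | G): approximating the
   G-measurable factor [W] by G-simple functions transfers it to products. *)
Lemma integral_mul_cond_exp (Y Z : T -> R) :
  (forall A, G A -> \int[mu]_(x in A) (Z x)%:E = \int[mu]_(x in A) (Y x)%:E)%E ->
  mu.-integrable setT (EFin \o Y) -> mu.-integrable setT (EFin \o Z) ->
  mu.-integrable setT (EFin \o (W \* Y)) -> mu.-integrable setT (EFin \o (W \* Z)) ->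
  (\int[mu]_x (W x * Y x)%:E = \int[mu]_x (W x * Z x)%:E)%E.
Proof.
move=> YZ iY iZ iWY iWZ.
have := cvg_integral_quantize_mul iY iWY.
have -> : (fun K => \int[mu]_x (quantize W K x * Y x)%:E)%E =
          (fun K => \int[mu]_x (quantize W K x * Z x)%:E)%E.
  apply/funext => K; rewrite !integral_quantize_mul //.
  by apply: eq_bigr => i _; rewrite YZ //; exact: G_cell.
by move=> cvgY; exact: cvg_unique _ cvgY (cvg_integral_quantize_mul iZ iWZ).
Qed.

Lemma integral_mul_cond_exp_le (Y Z : T -> R) :
  (forall A, G A -> \int[mu]_(x in A) (Z x)%:E = \int[mu]_(x in A) (Y x)%:E)%E ->
  mu.-integrable setT (EFin \o Y) -> mu.-integrable setT (EFin \o Z) ->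
  mu.-integrable setT (EFin \o (W \* Y)) -> measurable_fun setT (W \* Z) ->
  (\int[mu]_x (W x * Y x)%:E <= \int[mu]_x `|W x * Z x|%:E)%E.
Proof.
move=> YZ iY iZ iWY mWZ.
have [iWZ|niWZ] := pselect (mu.-integrable setT (EFin \o (W \* Z))); last first.
  suff -> : (\int[mu]_x `|W x * Z x|%:E = +oo)%E by rewrite leey.
  apply/eqP; rewrite eq_le leey /= leNgt; apply/negP => finite; apply: niWZ.
  apply/integrableP; split; first exact/measurable_EFinP.
  by under eq_integral do rewrite abse_EFin.
rewrite (integral_mul_cond_exp YZ iY iZ iWY iWZ).
apply: le_trans (lee_abs _) _.
under [X in (_ <= X)%E]eq_integral do rewrite -abse_EFin.
by apply: le_abse_integral => //; exact/measurable_EFinP.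
Qed.

End QuantizedIntegral.

Section Corollary6.
Variables (d : measure_display) (T : measurableType d) (R : realType).
Variables (P : probability T R) (X : int -> T -> R) (F : int -> set (set T)).
Variable n : nat.
Hypotheses (hF : filtration F) (adX : forall i, G_measurable (F i) (X i)).
Hypothesis X2 : forall i, P.-integrable setT (fun x => ((X i x) ^+ 2)%:E).

Let mX i : measurable_fun setT (X i).
Proof. exact: G_measurable_measurable (hF.1 i).2 (adX i). Qed.

Let square_integrable_X i : square_integrable P (X i).
Proof. by split; [exact: mX | exact: X2]. Qed.

Let square_integrable_psum k : square_integrable P (psum X k).
Proof.
elim: k => [|k IH].
  apply: (square_integrable_le _ (square_integrable_X 0)) => [|x].
    rewrite (_ : psum X 0 = cst 0); first exact: measurable_cst.
    by apply/funext => x; rewrite psum0.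
  by rewrite psum0 normr0.
rewrite (_ : psum X k.+1 = psum X k \+ X k.+1%:Z); last first.
  by apply/funext => x; rewrite psumS.
exact: square_integrableD.
Qed.

Let square_integrable_slope_incr j : square_integrable P (slope_incr X j).
Proof.
apply: (square_integrable_le _ (square_integrableZ 8 (square_integrable_X j%:Z))).
  by apply: measurable_slope_incr => i _; exact: mX.
by move=> x; rewrite normrM (@ger0_norm _ 8) //; exact: slope_incr_le.
Qed.

Let square_integrable_psum_sub j :
  square_integrable P (fun x => psum X n x - psum X j x).
Proof.
rewrite (_ : (fun x => _) = psum X n \+ (fun x => -1 * psum X j x)).
  exact/square_integrableD/square_integrableZ.
by apply/funext => x /=; rewrite mulN1r.
Qed.

Let integrable_slope_incr_mul j :
  P.-integrable setT (EFin \o (slope_incr X j \* (fun x => psum X n x - psum X j x))).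
Proof. exact: square_integrable_mul. Qed.

Lemma integral_slope_incr_mul_le j (Z : T -> R) :
  is_cond_exp P (F j%:Z) (fun x => psum X n x - psum X j x) Z ->
  (\int[P]_x (slope_incr X j x * (psum X n x - psum X j x))%:E <=
   8%:E * \int[P]_x `|X j%:Z x * Z x|%:E)%E.
Proof.
move=> [GZ iZ YZ]; have GM := (hF.1 j%:Z).2.
have mZ := G_measurable_measurable GM GZ.
have mW : measurable_fun setT (slope_incr X j).
  by apply: measurable_slope_incr => i _; exact: mX.
have GW := slope_incr_adapted j hF adX.
apply: le_trans (integral_mul_cond_exp_le GM GW YZ _ iZ _ _) _.
- exact/square_integrable_integrable.
- exact: integrable_slope_incr_mul.
- exact: measurable_funM.
rewrite -ge0_integralZl_EFin //; last first.
  by apply/measurable_EFinP/measurableT_comp => //; exact: measurable_funM.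
apply: ge0_le_integral => //.
- by apply/measurable_EFinP/measurableT_comp => //; exact: measurable_funM.
- apply/measurable_EFinP/measurable_funM; first exact: measurable_cst.
  exact/measurableT_comp/measurable_funM.
- move=> x _; rewrite lee_fin !normrM mulrA ler_wpM2r //.
  exact: slope_incr_le.
Qed.

Lemma integral_pmax_sq_le :
  (\int[P]_x ((pmax X n x) ^+ 2)%:E <=
   4%:E * (\sum_(1 <= k < n.+1) \int[P]_x ((X k%:Z x) ^+ 2)%:E) +
   \sum_(1 <= j < n) \int[P]_x (slope_incr X j x * (psum X n x - psum X j x))%:E)%E.
Proof.
pose V x := 4 * \sum_(1 <= i < n.+1) X i%:Z x ^+ 2.
pose U x := \sum_(1 <= j < n) slope_incr X j x * (psum X n x - psum X j x).
have iV : P.-integrable setT (EFin \o V).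
  by apply/integrable_EFinZ/integrable_EFin_sum => i; exact: X2.
have iU : P.-integrable setT (EFin \o U).
  by apply: integrable_EFin_sum => j; exact: integrable_slope_incr_mul.
have iVU := integrable_EFinD iV iU.
have ipmax : P.-integrable setT (EFin \o (fun x => pmax X n x ^+ 2)).
  apply: (integrable_le_norm _ iVU) => [|x].
    by apply/measurable_funX/(measurable_pmax (j := n)) => // i _; exact: mX.
  rewrite ger0_norm ?sqr_ge0 //; apply: le_trans (ler_norm _).
  exact: pathwise_bound.
apply: le_trans (_ : _ <= \int[P]_x ((V \+ U) x)%:E)%E _.
  by apply: le_integral => // x _; rewrite lee_fin; exact: pathwise_bound.
under eq_integral do rewrite EFinD.
rewrite le_eqVlt; apply/orP; left; apply/eqP.
rewrite integralD //; congr (_ + _)%E.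
  under eq_integral do rewrite EFinM -sumEFin.
  rewrite integralZl //; last by apply: integrable_sum => // i _; exact: X2.
  by rewrite integral_sum // => i; exact: X2.
under eq_integral do rewrite -sumEFin.
by rewrite integral_sum // => j; exact: integrable_slope_incr_mul.
Qed.

End Corollary6.

Unset Implicit Arguments.

Theorem corollary6 (d : measure_display) (T : measurableType d) (R : realType)
  (P : probability T R) (X : int -> T -> R) (F : int -> set (set T))
  (Z : nat -> T -> R) (n : nat) :
  filtration F ->
  (forall i, G_measurable (F i) (X i)) ->
  (forall i, P.-integrable setT (fun x => ((X i x) ^+ 2)%:E)) ->
  (1 <= n)%N ->
  (forall k : nat, (1 <= k < n)%N ->
     is_cond_exp P (F k%:Z) (fun x => psum X n x - psum X k x) (Z k)) ->
  (\int[P]_x ((pmax X n x) ^+ 2)%:E <=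
     4%:E * (\sum_(1 <= k < n.+1) \int[P]_x ((X k%:Z x) ^+ 2)%:E)
     + 12%:E * (\sum_(1 <= k < n) \int[P]_x (`|X k%:Z x * Z k x|)%:E))%E.
Proof.
(* The bound holds for n = 0 as well. *)
move=> hF adX X2 _ condZ.
pose E k := (\int[P]_x `|X k%:Z x * Z k x|%:E)%E.
have E_ge0 k : (0 <= E k)%E by apply: integral_ge0 => x _; rewrite lee_fin.
apply: le_trans (integral_pmax_sq_le n hF adX X2) _; apply: leeD => //.
apply: le_trans (_ : _ <= 8%:E * \sum_(1 <= k < n) E k)%E _.
  rewrite ge0_sume_distrr // big_seq [X in (_ <= X)%E]big_seq.
  apply: lee_sum => k; rewrite mem_index_iota => kn.
  exact: integral_slope_incr_mul_le (condZ k kn).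
by apply: lee_wpmul2r; [exact: sume_ge0 | rewrite lee_fin ler_nat].
Qed.
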